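(* Let $a,b,e\in\mathbb{R}$ with $b\ne0$, and let $\alpha_i(t)$ ($i=1,\dots,4$) be scalar continuous functions. (i) Suppose $b\alpha_1(t)+\alpha_3(t)$ is $2\pi/|b|$-periodic and odd, and $a(a+e)<0$. Then the solution $$x(t)=\sqrt{-a(a+e)}\sin\Big(bt+\int_0^t(b\alpha_1(s)+\alpha_3(s))ds\Big),\ y(t)=\sqrt{-a(a+e)}\cos\Big(bt+\int_0^t(b\alpha_1(s)+\alpha_3(s))ds\Big),\ z(t)=-a$$ of the system $$\begin{aligned}\dot x&=(ax+by+xz)(1+\alpha_1(t))+x(a+z)\alpha_2(t)+y\alpha_3(t),\\ \dot y&=(-bx+ay+yz)(1+\alpha_1(t))+y(a+z)\alpha_2(t)-x\alpha_3(t),\\ \dot z&=(ez-x^2-y^2-z^2)(1+\alpha_1(t)+\alpha_2(t))\end{aligned}$$ is $2\pi/|b|$-periodic (the period not necessarily minimal). (ii) Suppose $b\alpha_1(t)+\alpha_3(t)+a^4\alpha_4(t)$ is $2\pi/|b|$-periodic and odd. Then the solution $$x(t)=a\sin\Big(bt+\int_0^t(b\alpha_1(s)+\alpha_3(s)+a^4\alpha_4(s))ds\Big),\ y(t)=a\cos\Big(bt+\int_0^t(b\alpha_1(s)+\alpha_3(s)+a^4\alpha_4(s))ds\Big),\ z(t)=-a$$ of the system $$\begin{aligned}\dot x&=(ax+by+xz)(1+\alpha_1(t))+x(a+z)\alpha_2(t)+y\alpha_3(t)-y(x^2+y^2)(4az+x^2+y^2+2z^2)\alpha_4(t),\\ \dot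 y&=(-bx+ay+yz)(1+\alpha_1(t))+y(a+z)\alpha_2(t)-x\alpha_3(t)+x(x^2+y^2)(4az+x^2+y^2+2z^2)\alpha_4(t),\\ \dot z&=-(2az+x^2+y^2+z^2)(1+\alpha_1(t)+\alpha_2(t))\end{aligned}$$ is $2\pi/|b|$-periodic (the period not necessarily minimal). *)

From Stdlib Require Import Reals.
From Coquelicot Require Import Coquelicot.
Open Scope R_scope.

Definition periodic (f : R -> R) (T : R) : Prop := forall t, f (t + T) = f t.

Definition odd_fun (f : R -> R) : Prop := forall t, f (- t) = - f t.

From Stdlib Require Import Reals Lra.
From Coquelicot Require Import Coquelicot.
Open Scope R_scope.

(* On the invariant circle x^2 + y^2 = r^2, z = -a, both vector fields reduce to a rotation
   of (x, y) with angular speed b + g(t), where g = b*al1 + al3 (+ a^4 al4).  The solution is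
   therefore r (sin th, cos th, -a) with th(t) = b t + G(t), G the primitive of g vanishing
   at 0.  Since g is odd and T-periodic, G is T-periodic, so th(t + T) = th(t) +- 2 pi for
   T = 2 pi / |b|. *)

Lemma continuous_scal_plus (c : R) (f h : R -> R) t :
  continuous f t -> continuous h t -> continuous (fun s => c * f s + h s) t.
Proof.
  intros Cf Ch. apply (continuous_plus (fun s => c * f s)); auto.
  apply (continuous_scal_r c f); auto.
Qed.

Section PrimitiveOfOddPeriodic.

Variable g : R -> R.
Hypothesis g_cont : forall t, continuous g t.

Let g_int u v : ex_RInt g u v.
Proof. apply (@ex_RInt_continuous R_CompleteNormedModule); auto. Qed.

Lemma is_derive_RInt_0 t : is_derive (fun t => RInt g 0 t) t (g t).
Proof.
  apply is_derive_RInt with (a := 0); auto.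
  apply filter_forall; intros u. apply RInt_correct, g_int.
Qed.

Hypothesis g_odd : odd_fun g.

Lemma RInt_0_opp t : RInt g 0 (- t) = RInt g 0 t.
Proof.
  assert (E : RInt g 0 t = RInt (fun s => scal (-1) (g (-1 * s + 0))) 0 t).
  { apply RInt_ext; intros s _. unfold scal; simpl; unfold mult; simpl.
    replace (-1 * s + 0) with (- s) by ring. rewrite g_odd. ring. }
  rewrite E, (@RInt_comp_lin R_CompleteNormedModule) by apply g_int.
  f_equal; ring.
Qed.

Variable T : R.
Hypothesis g_per : periodic g T.

Lemma RInt_0_add_period t : RInt g 0 (t + T) = RInt g 0 T + RInt g 0 t.
Proof.
  assert (E : RInt g 0 t = RInt (fun s => scal 1 (g (1 * s + T))) 0 t).
  { apply RInt_ext; intros s _. unfold scal; simpl; unfold mult; simpl.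
    replace (1 * s + T) with (s + T) by ring. rewrite g_per. ring. }
  rewrite E, (@RInt_comp_lin R_CompleteNormedModule) by apply g_int.
  replace (1 * 0 + T) with T by ring. replace (1 * t + T) with (t + T) by ring.
  symmetry. apply (RInt_Chasles g); apply g_int.
Qed.

(* Shifting by T/2, the integral over [0, T] is the one over [-T/2, T/2], which vanishes
   because g is odd. *)
Lemma RInt_0_period : RInt g 0 T = 0.
Proof.
  pose proof (RInt_0_add_period (- (T / 2))) as H.
  replace (- (T / 2) + T) with (T / 2) in H by field.
  rewrite RInt_0_opp in H. lra.
Qed.

Lemma periodic_RInt_0 : periodic (fun t => RInt g 0 t) T.
Proof. intros t. rewrite RInt_0_add_period, RInt_0_period. ring. Qed.

End PrimitiveOfOddPeriodic.

Lemma sin_cos_add_period b u : b <> 0 ->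
  sin (u + b * (2 * PI / Rabs b)) = sin u /\ cos (u + b * (2 * PI / Rabs b)) = cos u.
Proof.
  intros Hb. destruct (Rle_or_lt 0 b) as [Hpos | Hneg].
  - rewrite Rabs_pos_eq by lra.
    replace (b * (2 * PI / b)) with (2 * PI) by (field; auto).
    rewrite sin_plus, cos_plus, sin_2PI, cos_2PI. split; ring.
  - rewrite Rabs_left by lra.
    replace (u + b * (2 * PI / - b)) with (u - 2 * PI) by (field; auto).
    rewrite sin_minus, cos_minus, sin_2PI, cos_2PI. split; ring.
Qed.

Lemma circle_sin_cos r u : (r * sin u) ^ 2 + (r * cos u) ^ 2 = r ^ 2.
Proof.
  replace (r ^ 2) with (r ^ 2 * ((sin u)² + (cos u)²)) by (rewrite sin2_cos2; ring).
  unfold Rsqr. ring.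
Qed.

Section CircularMotion.

Variables (b r : R) (g : R -> R).
Hypothesis g_cont : forall t, continuous g t.

Lemma is_derive_circular_motion t :
  is_derive (fun t => r * sin (b * t + RInt g 0 t)) t
    (r * cos (b * t + RInt g 0 t) * (b + g t)) /\
  is_derive (fun t => r * cos (b * t + RInt g 0 t)) t
    (- (r * sin (b * t + RInt g 0 t)) * (b + g t)).
Proof.
  assert (Dth : is_derive (fun t => b * t + RInt g 0 t) t (b + g t)).
  { apply (is_derive_plus (fun t => b * t)).
    - auto_derive; auto; ring.
    - apply is_derive_RInt_0; auto. }
  pose proof (is_derive_scal _ _ r _ (is_derive_comp sin _ t _ _ (is_derive_sin _) Dth)) as Dx.
  pose proof (is_derive_scal _ _ r _ (is_derive_comp cos _ t _ _ (is_derive_cos _) Dth)) as Dy.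
  split.
  - replace (r * cos _ * (b + g t)) with (r * ((b + g t) * cos (b * t + RInt g 0 t))) by ring.
    exact Dx.
  - replace (- (r * sin _) * (b + g t)) with (r * ((b + g t) * - sin (b * t + RInt g 0 t)))
      by ring.
    exact Dy.
Qed.

Lemma periodic_circular_motion : b <> 0 ->
  periodic g (2 * PI / Rabs b) -> odd_fun g ->
  periodic (fun t => r * sin (b * t + RInt g 0 t)) (2 * PI / Rabs b) /\
  periodic (fun t => r * cos (b * t + RInt g 0 t)) (2 * PI / Rabs b).
Proof.
  intros Hb Hper Hodd.
  assert (Hth : forall t, b * (t + 2 * PI / Rabs b) + RInt g 0 (t + 2 * PI / Rabs b)
                          = (b * t + RInt g 0 t) + b * (2 * PI / Rabs b)).
  { intros t. rewrite (periodic_RInt_0 g g_cont Hodd _ Hper t). ring. }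
  split; intros t; rewrite Hth; f_equal; apply sin_cos_add_period, Hb.
Qed.

End CircularMotion.

Lemma system_i_on_circle a b e p1 p2 p3 X Y Z :
  X ^ 2 + Y ^ 2 = - (a * (a + e)) -> Z = - a ->
  (a * X + b * Y + X * Z) * (1 + p1) + X * (a + Z) * p2 + Y * p3 = Y * (b + (b * p1 + p3)) /\
  (- b * X + a * Y + Y * Z) * (1 + p1) + Y * (a + Z) * p2 - X * p3
    = - X * (b + (b * p1 + p3)) /\
  (e * Z - X ^ 2 - Y ^ 2 - Z ^ 2) * (1 + p1 + p2) = 0.
Proof.
  intros Hcirc ->. replace (X ^ 2) with (- (a * (a + e)) - Y ^ 2) by lra.
  repeat split; ring.
Qed.

Lemma system_ii_on_circle a b p1 p2 p3 p4 X Y Z :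
  X ^ 2 + Y ^ 2 = a ^ 2 -> Z = - a ->
  (a * X + b * Y + X * Z) * (1 + p1) + X * (a + Z) * p2 + Y * p3
    - Y * (X ^ 2 + Y ^ 2) * (4 * a * Z + X ^ 2 + Y ^ 2 + 2 * Z ^ 2) * p4
    = Y * (b + (b * p1 + p3 + a ^ 4 * p4)) /\
  (- b * X + a * Y + Y * Z) * (1 + p1) + Y * (a + Z) * p2 - X * p3
    + X * (X ^ 2 + Y ^ 2) * (4 * a * Z + X ^ 2 + Y ^ 2 + 2 * Z ^ 2) * p4
    = - X * (b + (b * p1 + p3 + a ^ 4 * p4)) /\
  - (2 * a * Z + X ^ 2 + Y ^ 2 + Z ^ 2) * (1 + p1 + p2) = 0.
Proof.
  intros Hcirc ->. replace (X ^ 2) with (a ^ 2 - Y ^ 2) by lra.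
  repeat split; ring.
Qed.
Theorem proposition1 (a b e : R) (al1 al2 al3 al4 : R -> R) :
  b <> 0 ->
  (forall t, continuous al1 t) -> (forall t, continuous al2 t) ->
  (forall t, continuous al3 t) -> (forall t, continuous al4 t) ->
  (* part (i) *)
  ( periodic (fun t => b * al1 t + al3 t) (2 * PI / Rabs b) ->
    odd_fun (fun t => b * al1 t + al3 t) ->
    a * (a + e) < 0 ->
    let th := fun t => b * t + RInt (fun s => b * al1 s + al3 s) 0 t in
    let x := fun t => sqrt (- (a * (a + e))) * sin (th t) in
    let y := fun t => sqrt (- (a * (a + e))) * cos (th t) in
    let z := fun _ : R => - a in
    (forall t,
      is_derive x t ((a * x t + b * y t + x t * z t) * (1 + al1 t)
                     + x t * (a + z t) * al2 t + y t * al3 t) /\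
      is_derive y t ((- b * x t + a * y t + y t * z t) * (1 + al1 t)
                     + y t * (a + z t) * al2 t - x t * al3 t) /\
      is_derive z t ((e * z t - x t ^ 2 - y t ^ 2 - z t ^ 2)
                     * (1 + al1 t + al2 t))) /\
    periodic x (2 * PI / Rabs b) /\ periodic y (2 * PI / Rabs b) /\
    periodic z (2 * PI / Rabs b) ) /\
  (* part (ii) *)
  ( periodic (fun t => b * al1 t + al3 t + a ^ 4 * al4 t) (2 * PI / Rabs b) ->
    odd_fun (fun t => b * al1 t + al3 t + a ^ 4 * al4 t) ->
    let th := fun t => b * t + RInt (fun s => b * al1 s + al3 s + a ^ 4 * al4 s) 0 t in
    let x := fun t => a * sin (th t) in
    let y := fun t => a * cos (th t) in
    let z := fun _ : R => - a in
    (forall t,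
      is_derive x t ((a * x t + b * y t + x t * z t) * (1 + al1 t)
                     + x t * (a + z t) * al2 t + y t * al3 t
                     - y t * (x t ^ 2 + y t ^ 2)
                       * (4 * a * z t + x t ^ 2 + y t ^ 2 + 2 * z t ^ 2) * al4 t) /\
      is_derive y t ((- b * x t + a * y t + y t * z t) * (1 + al1 t)
                     + y t * (a + z t) * al2 t - x t * al3 t
                     + x t * (x t ^ 2 + y t ^ 2)
                       * (4 * a * z t + x t ^ 2 + y t ^ 2 + 2 * z t ^ 2) * al4 t) /\
      is_derive z t (- (2 * a * z t + x t ^ 2 + y t ^ 2 + z t ^ 2)
                     * (1 + al1 t + al2 t))) /\
    periodic x (2 * PI / Rabs b) /\ periodic y (2 * PI / Rabs b) /\
    periodic z (2 * PI / Rabs b) ).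
Proof.
  intros Hb C1 C2 C3 C4. split.
  - intros Hper Hodd Hae th x y z.
    set (g := fun s => b * al1 s + al3 s) in *.
    assert (Cg : forall t, continuous g t) by (intros t; apply continuous_scal_plus; auto).
    assert (Hcirc : forall t, x t ^ 2 + y t ^ 2 = - (a * (a + e))).
    { intros t. unfold x, y. rewrite circle_sin_cos. apply pow2_sqrt. lra. }
    destruct (periodic_circular_motion b (sqrt (- (a * (a + e)))) g Cg Hb Hper Hodd)
      as [Px Py].
    split; [intros t | repeat split; auto].
    destruct (system_i_on_circle a b e (al1 t) (al2 t) (al3 t) (x t) (y t) (z t)
                (Hcirc t) eq_refl) as (Ex & Ey & Ez).
    destruct (is_derive_circular_motion b (sqrt (- (a * (a + e)))) g Cg t) as [Dx Dy].
    rewrite Ex, Ey, Ez. split; [exact Dx | split; [exact Dy | exact (is_derive_const _ _)]].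
  - intros Hper Hodd th x y z.
    set (g := fun s => b * al1 s + al3 s + a ^ 4 * al4 s) in *.
    assert (Cg : forall t, continuous g t).
    { intros t. apply (continuous_plus (fun s => b * al1 s + al3 s)).
      - apply continuous_scal_plus; auto.
      - apply (continuous_scal_r (a ^ 4) al4); auto. }
    destruct (periodic_circular_motion b a g Cg Hb Hper Hodd) as [Px Py].
    split; [intros t | repeat split; auto].
    destruct (system_ii_on_circle a b (al1 t) (al2 t) (al3 t) (al4 t) (x t) (y t) (z t)
                (circle_sin_cos a (th t)) eq_refl) as (Ex & Ey & Ez).
    destruct (is_derive_circular_motion b a g Cg t) as [Dx Dy].
    rewrite Ex, Ey, Ez. split; [exact Dx | split; [exact Dy | exact (is_derive_const _ _)]].
Qed.
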